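(* Let $\{\Pi_i\}_{i=1}^n$ be a qubit POVM written as $\Pi_i=\alpha_i(\mathbb{I}+\eta_i\hat n_i\cdot\vec\sigma)$ with $\alpha_i\ge0$, $\eta_i\in[0,1]$, $\hat n_i$ unit vectors, $\sum_i\alpha_i=1$, $\sum_i\alpha_i\eta_i\hat n_i=\vec0$. Then $$R(\{\Pi_i\})=\inf_{\substack{\vec c\in\mathbb{R}^3,\ |\vec c|=1\\ c_0\in[-1,1]}}\ \sum_{i=1}^n\bigl|\alpha_i(c_0+\eta_i\,\vec c\cdot\hat n_i)\bigr|.$$
   Context: A POVM $\{\Pi_i\}$ simulates a family $\{M_{a|x}\}$ if $M_{a|x}=\sum_i p(a|x,i)\Pi_i$ with $p(a|x,i)\ge0$, $\sum_a p(a|x,i)=1$. $\mathcal{P}_r$ is the family of two-outcome POVMs $\{\tfrac12(\mathbb{I}\pm r\hat n\cdot\vec\sigma)\}$ over all unit $\hat n\in\mathbb{R}^3$. $R(\{\Pi_i\})$ is the largest $r$ such that $\{\Pi_i\}$ simulates $\mathcal{P}_r$. *)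

From HB Require Import structures.
From mathcomp Require Import all_boot all_order all_algebra.
From mathcomp Require Import complex.
From mathcomp Require Import all_classical all_reals.
Set Implicit Arguments. Unset Strict Implicit. Unset Printing Implicit Defensive.
Import Order.TTheory GRing.Theory Num.Theory.
Local Open Scope ring_scope.
Local Open Scope complex_scope.

Section Qubit.
Variable R : realType.
Local Notation C := R[i].

Definition sigmaX : 'M[C]_2 :=
  \matrix_(a < 2, b < 2) (if a != b then 1 else 0).
Definition sigmaY : 'M[C]_2 :=
  \matrix_(a < 2, b < 2)
    (if (val a == 0%N) && (val b == 1%N) then - 'i
     else if (val a == 1%N) && (val b == 0%N) then 'i else 0).
Definition sigmaZ : 'M[C]_2 :=
  \matrix_(a < 2, b < 2)
    (if a == b then (if val a == 0%N then 1 else -1) else 0).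

Definition sigma (k : 'I_3) : 'M[C]_2 :=
  if val k == 0%N then sigmaX else if val k == 1%N then sigmaY else sigmaZ.

Definition dot3 (u v : 'rV[R]_3) : R := \sum_(k < 3) u 0 k * v 0 k.
Definition unit3 (v : 'rV[R]_3) : Prop := dot3 v v = 1.

Definition ndotsigma (v : 'rV[R]_3) : 'M[C]_2 :=
  \sum_(k < 3) (v 0 k)%:C *: sigma k.

Definition simulates (n : nat) (X : Type) (A : finType)
    (Pi : 'I_n -> 'M[C]_2) (M : X -> A -> 'M[C]_2) : Prop :=
  exists p : A -> X -> 'I_n -> R,
    (forall a x i, 0 <= p a x i) /\
    (forall x i, \sum_(a : A) p a x i = 1) /\
    (forall a x, M x a = \sum_(i < n) (p a x i)%:C *: Pi i).

Definition unit_vec := {v : 'rV[R]_3 | unit3 v}.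

Definition Pfam (r : R) : unit_vec -> bool -> 'M[C]_2 :=
  fun x a => (2^-1)%:C *: (1%:M + ((if a then 1 else -1) * r)%:C *: ndotsigma (sval x)).

Definition is_Rval (n : nat) (Pi : 'I_n -> 'M[C]_2) (r : R) : Prop :=
  simulates Pi (Pfam r) /\ (forall r', simulates Pi (Pfam r') -> r' <= r).

Definition povm_of (n : nat) (alpha eta : 'I_n -> R) (nv : 'I_n -> 'rV[R]_3)
  : 'I_n -> 'M[C]_2 :=
  fun i => (alpha i)%:C *: (1%:M + (eta i)%:C *: ndotsigma (nv i)).

End Qubit.

(* We identify a hermitian 2x2 matrix u0 I + u . sigma with its Bloch coordinates
   u = (u0, u) in T = R * R^3, on which <(c0, c), (u0, u)> = c0 u0 + c . u is a
   nondegenerate pairing; Pi_i has coordinates pi_i = alpha_i (1, eta_i n_i) and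
   h(c) = sum_i |<c, pi_i>|.
   - Upper bound: if sum_i p_i Pi_i = (I + r x . sigma)/2 with 0 <= p_i <= 1, pairing
     with (c0, x) gives r = sum_i (2 p_i - 1) <(c0, x), pi_i> <= h(c0, x).
   - Attainment: h(c) >= r0 (c . x) for every c and unit x (by homogeneity of h).
     A finite-dimensional Hahn-Banach argument (a linear functional dominated by
     sum_i |v_i| is a [-1,1]-combination of the v_i) then yields t in [-1,1]^n with
     sum_i t_i pi_i = r0 (0, x), and p_(+/-),i = (1 +/- t_i)/2 simulates P_r0. *)
From HB Require Import structures.
From mathcomp Require Import all_boot all_order all_algebra.
From mathcomp Require Import complex.
From mathcomp Require Import all_classical all_reals.
From mathcomp Require Import ring lra.
Import Order.TTheory GRing.Theory Num.Theory.
Local Open Scope ring_scope.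
Local Open Scope classical_set_scope.
Set Implicit Arguments. Unset Strict Implicit.

Section DominatedFunctional.
Variables (R : realType) (T : lmodType R).

Lemma scalar0 (f : T -> R) : scalar f -> f 0 = 0.
Proof. by move=> hf; have := hf 1 0 0; rewrite scale1r addr0 mul1r; lra. Qed.

Lemma scalar_comb (f : T -> R) (a b : R) (u v : T) :
  scalar f -> f (a *: u + b *: v) = a * f u + b * f v.
Proof. by move=> hf; rewrite hf -[b *: v]addr0 hf (scalar0 hf); ring. Qed.

Lemma scalar_le0_eq0 (f : T -> R) :
  scalar f -> (forall c, f c <= 0) -> forall c, f c = 0.
Proof.
move=> hf hle c; have := hle ((-1) *: c + 0); rewrite hf (scalar0 hf).
by have := hle c; lra.
Qed.

(* One step of Hahn-Banach: a linear X dominated by h + |w| (h sublinear on the cone,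
   w linear) is dominated by h after subtracting a suitable multiple s w, |s| <= 1. *)
Section OneStepExtension.
Variables X w h : T -> R.
Hypothesis X_linear : scalar X.
Hypothesis w_linear : scalar w.
Hypothesis h_sublinear : forall u v mu la, 0 <= mu -> 0 <= la ->
  h (mu *: u + la *: v) <= mu * h u + la * h v.
Hypothesis X_dom : forall c, X c <= h c + `|w c|.

(* Every lower constraint on s lies below every upper constraint: evaluate the
   domination at the combination of c and d on which w vanishes. *)
Lemma constraint_gap c d :
  0 < w c -> w d < 0 -> (X c - h c) / w c <= (h d - X d) / - w d.
Proof.
move=> wc wd; have wd' : 0 < - w d by rewrite oppr_gt0.
set e := (- w d) *: c + w c *: d.
have we : w e = 0 by rewrite /e scalar_comb //; ring.
have he := h_sublinear c d (ltW wd') (ltW wc).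
have := X_dom e; rewrite we normr0 addr0 /e scalar_comb // => hXe.
rewrite ler_pdivrMr // mulrAC ler_pdivlMr //; nra.
Qed.

Lemma one_step_extension :
  exists2 s, -1 <= s <= 1 & forall c, X c - s * w c <= h c.
Proof.
have lower_le1 c : 0 < w c -> (X c - h c) / w c <= 1.
  by move=> wc; rewrite ler_pdivrMr // mul1r; have := X_dom c; rewrite gtr0_norm //; lra.
have upper_ge1 d : w d < 0 -> -1 <= (h d - X d) / - w d.
  by move=> wd; rewrite ler_pdivlMr ?oppr_gt0 //; have := X_dom d; rewrite ltr0_norm //; lra.
(* s is the largest lower constraint (or -1). *)
pose L := [set y : R | y = -1 \/ exists2 c, 0 < w c & y = (X c - h c) / w c].
have L_ub y : L y -> y <= 1 /\ forall d, w d < 0 -> y <= (h d - X d) / - w d.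
  case=> [->|[c wc ->]]; split; [lra | exact: upper_ge1 | exact: lower_le1 |].
  by move=> d; exact: constraint_gap.
have L_neg1 : L (-1) by left.
have L_sup : has_sup L by split; [exists (-1) | exists 1 => y /L_ub []].
exists (sup L).
  apply/andP; split; first exact: sup_upper_bound.
  by apply: ge_sup; [exists (-1) | move=> y /L_ub []].
move=> c; have := X_dom c; case: (ltgtP (w c) 0) => wc.
- have : sup L <= (h c - X c) / - w c.
    by apply: ge_sup; [exists (-1) | move=> y /L_ub [] _ /(_ c wc)].
  rewrite ler_pdivlMr ?oppr_gt0 // ltr0_norm //; nra.
- have : (X c - h c) / w c <= sup L by apply: sup_upper_bound => //; right; exists c.
  rewrite ler_pdivrMr // gtr0_norm //; nra.
- by rewrite wc normr0 mulr0; lra.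
Qed.
End OneStepExtension.

Lemma dominated_functional n (X : T -> R) (v : 'I_n -> T -> R) :
  scalar X -> (forall i, scalar (v i)) ->
  (forall c, X c <= \sum_(i < n) `|v i c|) ->
  exists2 t : 'I_n -> R, (forall i, -1 <= t i <= 1) &
    forall c, X c = \sum_(i < n) t i * v i c.
Proof.
elim: n X v => [|n IH] X v hX hv hdom.
  exists (fun=> 0) => [[]//|c]; rewrite big_ord0.
  by apply: scalar_le0_eq0 => // d; have := hdom d; rewrite big_ord0.
pose h c := \sum_(i < n) `|v (lift ord0 i) c|.
have h_sub u w mu la : 0 <= mu -> 0 <= la -> h (mu *: u + la *: w) <= mu * h u + la * h w.
  move=> hmu hla; rewrite /h !mulr_sumr -big_split /=; apply: ler_sum => i _.
  rewrite scalar_comb //; apply: (le_trans (ler_normD _ _)).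
  by rewrite !normrM (ger0_norm hmu) (ger0_norm hla).
have h_dom c : X c <= h c + `|v ord0 c| by have := hdom c; rewrite big_ord_recl addrC.
have [s hs hXs] := one_step_extension hX (hv ord0) h_sub h_dom.
pose X' c := X c - s * v ord0 c.
have hX' : scalar X' by move=> a c d; rewrite /X' hX (hv ord0); ring.
have [t' ht' eqX'] := IH X' (fun i => v (lift ord0 i)) hX' (fun i => hv _) hXs.
exists (fun i => if unlift ord0 i is Some j then t' j else s).
  by move=> i; case: unliftP => [j _|_].
move=> c; rewrite big_ord_recl unlift_none.
under eq_bigr do rewrite liftK.
by rewrite -eqX' /X'; ring.
Qed.
End DominatedFunctional.

Lemma sum_half_weights (R : fieldType) (V : lmodType R) n (s : R)
    (t : 'I_n -> R) (u : 'I_n -> V) :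
  \sum_(i < n) ((1 + s * t i) / 2) *: u i =
  2^-1 *: (\sum_(i < n) u i + s *: \sum_(i < n) t i *: u i).
Proof.
rewrite scaler_sumr -big_split scaler_sumr; apply: eq_bigr => i _.
by rewrite scalerDr !scalerA -scalerDl; congr (_ *: _); ring.
Qed.

Section Dot3.
Variable R : realType.
Implicit Types u v w : 'rV[R]_3.

Lemma sum3 (V : zmodType) (F : 'I_3 -> V) : \sum_(k < 3) F k = F 0 + F 1 + F 2%:R.
Proof.
rewrite !big_ord_recl big_ord0 addr0 addrA.
by congr (F _ + F _ + F _); apply/val_inj.
Qed.

Lemma dot3E u w : dot3 u w = u 0 0 * w 0 0 + u 0 1 * w 0 1 + u 0 2%:R * w 0 2%:R.
Proof. by rewrite /dot3 sum3. Qed.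

Lemma dot3C u w : dot3 u w = dot3 w u.
Proof. by rewrite !dot3E; ring. Qed.

Lemma dot3_linearl (a : R) u v w : dot3 (a *: u + v) w = a * dot3 u w + dot3 v w.
Proof. by rewrite !dot3E !mxE; ring. Qed.

Lemma dot3Zr (a : R) u w : dot3 u (a *: w) = a * dot3 u w.
Proof. by rewrite !dot3E !mxE; ring. Qed.

Lemma dot3Zl (a : R) u w : dot3 (a *: u) w = a * dot3 u w.
Proof. by rewrite dot3C dot3Zr dot3C. Qed.

Lemma dot3_0r u : dot3 u 0 = 0.
Proof. by rewrite -(scale0r 0) dot3Zr mul0r. Qed.

Lemma dot3_sumr n u (q : 'I_n -> R) (w : 'I_n -> 'rV[R]_3) :
  dot3 u (\sum_(i < n) q i *: w i) = \sum_(i < n) q i * dot3 u (w i).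
Proof.
elim/big_rec2: _ => [|i y s _ <-]; first exact: dot3_0r.
by rewrite dot3C dot3_linearl !(dot3C u).
Qed.

Lemma exists_unit3 : exists u, unit3 u.
Proof.
exists (\row_(k < 3) ((k == 0)%:R : R)).
by rewrite /unit3 dot3E !mxE /= mulr1 !mulr0 !addr0.
Qed.

(* Cauchy-Schwarz, via Lagrange's identity in dimension 3. *)
Lemma dot3_CS u w : dot3 u w ^+ 2 <= dot3 u u * dot3 w w.
Proof.
rewrite !dot3E.
have := sqr_ge0 (u 0 0 * w 0 1 - u 0 1 * w 0 0).
have := sqr_ge0 (u 0 0 * w 0 2%:R - u 0 2%:R * w 0 0).
have := sqr_ge0 (u 0 1 * w 0 2%:R - u 0 2%:R * w 0 1).
nra.
Qed.

Lemma dot3_unit_bound u w : unit3 u -> unit3 w -> -1 <= dot3 u w <= 1.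
Proof.
move=> hu hw; have := dot3_CS u w; rewrite hu hw mulr1 => h.
by apply/andP; split; nra.
Qed.

Lemma dot3_eq0 w : dot3 w w = 0 -> w = 0.
Proof.
move/psumr_eq0P=> h; apply/rowP => k; apply/eqP.
by rewrite mxE -sqrf_eq0 expr2 h // => j _; rewrite -expr2 sqr_ge0.
Qed.
End Dot3.

Section BlochPairing.
Variable R : realType.
Local Notation T := (R^o * 'rV[R]_3)%type.

Definition bdot (c u : T) : R := c.1 * u.1 + dot3 c.2 u.2.

Lemma bdotC (c u : T) : bdot c u = bdot u c.
Proof. by rewrite /bdot dot3C mulrC. Qed.

Lemma bdot_scalarl (u : T) : scalar (bdot^~ u).
Proof. by move=> a c d; rewrite /bdot /= dot3_linearl -[a *: c.1]/(a * c.1); ring. Qed.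

Lemma bdot_linearr (c : T) (a : R) (u v : T) :
  bdot c (a *: u + v) = a * bdot c u + bdot c v.
Proof. by rewrite ![bdot c _]bdotC bdot_scalarl. Qed.

Lemma bdotZl (a : R) (c u : T) : bdot (a *: c) u = a * bdot c u.
Proof. by rewrite -[a *: c]addr0 bdot_scalarl (scalar0 (bdot_scalarl u)) addr0. Qed.

Lemma bdotZr (a : R) (c u : T) : bdot c (a *: u) = a * bdot c u.
Proof. by rewrite bdotC bdotZl bdotC. Qed.

Lemma bdot_sumr n (c : T) (q : 'I_n -> R) (u : 'I_n -> T) :
  bdot c (\sum_(i < n) q i *: u i) = \sum_(i < n) q i * bdot c (u i).
Proof.
elim/big_rec2: _ => [|i y s _ <-]; last by rewrite bdot_linearr.
by have := bdot_linearr c 1 0 0; rewrite scale1r addr0 mul1r; lra.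
Qed.

(* The pairing is nondegenerate: pair u - v with itself. *)
Lemma bdot_inj (u v : T) : (forall c, bdot c u = bdot c v) -> u = v.
Proof.
move=> h; set w := (-1) *: v + u.
have hw : bdot w w = 0 by rewrite {2}/w bdot_linearr h; ring.
have h2 : 0 <= dot3 w.2 w.2 by apply: sumr_ge0 => k _; rewrite -expr2 sqr_ge0.
have w1 : w.1 = 0 by move: hw; rewrite /bdot; nra.
have w2 : w.2 = 0 by apply: dot3_eq0; move: hw; rewrite /bdot; nra.
have /eqP : w = 0 by clear hw h2; move: w w1 w2 => [? ?] /= -> ->.
by rewrite /w scaleN1r addrC subr_eq0 => /eqP.
Qed.
End BlochPairing.

Section Pauli.
Variable R : realType.
Local Notation C := R[i].
Local Notation T := (R^o * 'rV[R]_3)%type.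
Local Open Scope complex_scope.

Definition pauli (u : T) : 'M[C]_2 := u.1%:C *: 1%:M + ndotsigma u.2.

Lemma ndotsigma_linear (a : R) (u v : 'rV[R]_3) :
  ndotsigma (a *: u + v) = a%:C *: ndotsigma u + ndotsigma v.
Proof.
rewrite /ndotsigma scaler_sumr -big_split /=; apply: eq_bigr => k _.
by rewrite !mxE rmorphD rmorphM /= scalerDl scalerA.
Qed.

Lemma ndotsigma0 : ndotsigma (0 : 'rV[R]_3) = 0.
Proof. by rewrite /ndotsigma big1 // => k _; rewrite mxE rmorph0 scale0r. Qed.

Lemma pauli_linear (a : R) (u v : T) : a%:C *: pauli u + pauli v = pauli (a *: u + v).
Proof.
rewrite /pauli /= ndotsigma_linear -[a *: u.1]/(a * u.1) rmorphD rmorphM /=.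
by rewrite scalerDl -scalerA scalerDr addrACA.
Qed.

Lemma pauliZ (a : R) (u : T) : pauli (a *: u) = a%:C *: pauli u.
Proof.
rewrite /pauli /= -[a *: u.1]/(a * u.1) -[a *: u.2]addr0 ndotsigma_linear.
by rewrite ndotsigma0 addr0 rmorphM /= scalerDr scalerA.
Qed.

Lemma pauli_sum n (q : 'I_n -> R) (u : 'I_n -> T) :
  \sum_(i < n) (q i)%:C *: pauli (u i) = pauli (\sum_(i < n) q i *: u i).
Proof.
elim/big_rec2: _ => [|i y s _ ->]; last by rewrite pauli_linear.
have := pauli_linear 1 0 0; rewrite scale1r addr0 => /eqP.
by rewrite -subr_eq0 addrK scale1r => /eqP.
Qed.

Lemma pauliE (u : T) : pauli u = \matrix_(j < 2, k < 2)
  (if val j == 0%N then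
     (if val k == 0%N then (u.1 + u.2 0 2%:R) +i* 0 else u.2 0 0 +i* (- u.2 0 1))
   else
     (if val k == 0%N then u.2 0 0 +i* u.2 0 1 else (u.1 - u.2 0 2%:R) +i* 0)).
Proof.
apply/matrixP => j k; rewrite /pauli /ndotsigma !mxE summxE sum3 /sigma /= !mxE.
case: j k => [[|[|j]] Hj] [[|[|k]] Hk] //=.
all: by apply/eqP; rewrite eq_complex /=; apply/andP; split; apply/eqP; ring.
Qed.

Lemma pauli_inj (u v : T) : pauli u = pauli v -> u = v.
Proof.
move: u v => [u0 u] [v0 v]; rewrite !pauliE /= => /matrixP h.
have := h 0 0; have := h 1 1; have := h 1 0; rewrite !mxE /=.
case=> e0 e1 [e2] [e3]; congr pair; first by lra.
apply/rowP => k; case: k => [[|[|[|k]]] Hk] //.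
- by have -> : Ordinal Hk = 0 by apply/val_inj.
- by have -> : Ordinal Hk = 1 by apply/val_inj.
- have -> : Ordinal Hk = 2%:R by apply/val_inj.
  lra.
Qed.

Lemma povm_pauli n (alpha eta : 'I_n -> R) (nv : 'I_n -> 'rV[R]_3) i :
  povm_of alpha eta nv i = pauli (alpha i *: ((1, eta i *: nv i) : T)).
Proof.
by rewrite pauliZ /povm_of /pauli /= -[eta i *: nv i]addr0 ndotsigma_linear
  ndotsigma0 !addr0 scale1r.
Qed.

Lemma Pfam_pauli (r : R) (x : unit_vec R) (a : bool) :
  Pfam r x a = pauli (2^-1 *: ((1, 0) + ((if a then 1 else -1) * r) *: (0, sval x))).
Proof.
rewrite pauliZ addrC -pauli_linear /Pfam /pauli /= rmorph0 rmorph1 scale0r scale1r.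
by rewrite ndotsigma0 add0r addr0 addrC.
Qed.
End Pauli.

Section SimulationRadius.
Variables (R : realType) (n : nat) (alpha eta : 'I_n -> R) (nv : 'I_n -> 'rV[R]_3).
Hypothesis alpha_ge0 : forall i, 0 <= alpha i.
Hypothesis eta_01 : forall i, 0 <= eta i <= 1.
Hypothesis nv_unit : forall i, unit3 (nv i).
Hypothesis alpha_sum : \sum_(i < n) alpha i = 1.
Hypothesis bloch_balance : \sum_(i < n) (alpha i * eta i) *: nv i = 0.
Local Notation T := (R^o * 'rV[R]_3)%type.

Definition bloch (i : 'I_n) : T := alpha i *: (1, eta i *: nv i).

Lemma povm_bloch i : povm_of alpha eta nv i = pauli (bloch i).
Proof. exact: povm_pauli. Qed.

Lemma bdot_bloch c0 c i :
  bdot (c0, c) (bloch i) = alpha i * (c0 + eta i * dot3 c (nv i)).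
Proof. by rewrite bdotZr /bdot /= dot3Zr mulr1. Qed.

(* The effects sum to the identity: sum_i <c, pi_i> = c0. *)
Lemma bdot_sum_bloch (c : T) : \sum_(i < n) bdot c (bloch i) = c.1.
Proof.
case: c => c0 c; under eq_bigr do rewrite bdot_bloch mulrDr.
rewrite big_split /= -mulr_suml alpha_sum mul1r.
have := dot3_sumr c (fun i => alpha i * eta i) nv; rewrite bloch_balance dot3_0r => h.
by rewrite (eq_bigr (fun i => alpha i * eta i * dot3 c (nv i))) -?h ?addr0 // => i _; ring.
Qed.

Lemma sum_bloch : \sum_(i < n) bloch i = (1, 0).
Proof.
apply: bdot_inj => c; under eq_bigr do rewrite -[bloch _]scale1r.
rewrite bdot_sumr; under eq_bigr do rewrite mul1r.
by rewrite bdot_sum_bloch /bdot /= dot3_0r mulr1 addr0.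
Qed.

Definition hfun (c : T) : R := \sum_(i < n) `|bdot c (bloch i)|.

Lemma hfun_ge0 c : 0 <= hfun c.
Proof. exact: sumr_ge0. Qed.

Lemma hfun_ge_abs c : `|c.1| <= hfun c.
Proof. by rewrite -bdot_sum_bloch; exact: ler_norm_sum. Qed.

Lemma hfunZ (a : R) c : hfun (a *: c) = `|a| * hfun c.
Proof. by rewrite /hfun mulr_sumr; apply: eq_bigr => i _; rewrite bdotZl normrM. Qed.

(* At c0 = 1 every term is nonnegative, so h(1, c) = sum_i <(1, c), pi_i> = 1. *)
Lemma hfun_identity c : unit3 c -> hfun (1, c) = 1.
Proof.
move=> hc; rewrite -[RHS](bdot_sum_bloch (1, c)); apply: eq_bigr => i _.
rewrite bdot_bloch ger0_norm //; apply: mulr_ge0 => //.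
have := dot3_unit_bound hc (nv_unit i); have := eta_01 i.
by move=> /andP [h1 h2] /andP [h3 h4]; nra.
Qed.

Definition Rset := [set x : R | exists (c : 'rV[R]_3) (c0 : R),
  unit3 c /\ -1 <= c0 <= 1 /\
  x = \sum_(i < n) `|alpha i * (c0 + eta i * dot3 c (nv i))|].

Lemma hfun_in_Rset c0 c : unit3 c -> -1 <= c0 <= 1 -> Rset (hfun (c0, c)).
Proof.
by move=> hc hc0; exists c, c0; do 2!split => //; apply: eq_bigr => i _; rewrite bdot_bloch.
Qed.

Lemma Rset_hfun y : Rset y -> exists c0 c, [/\ unit3 c, -1 <= c0 <= 1 & y = hfun (c0, c)].
Proof.
case=> c [c0 [hc [hc0 ->]]]; exists c0, c; split => //.
by apply: eq_bigr => i _; rewrite bdot_bloch.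
Qed.

Lemma Rset_ne : Rset !=set0.
Proof.
have [c hc] := @exists_unit3 R; have zero_bound : -1 <= (0 : R) <= 1 by lra.
by exists (hfun (0, c)); exact: hfun_in_Rset.
Qed.

Lemma Rset_lb : lbound Rset 0.
Proof. by move=> y /Rset_hfun [c0 [c [_ _ ->]]]; exact: hfun_ge0. Qed.

Lemma inf_ge0 : 0 <= inf Rset.
Proof. exact: lb_le_inf Rset_ne Rset_lb. Qed.

(* The constraint |c0| <= 1 is harmless: for |c0| > 1, h(c0, c) >= |c0| > 1 = h(1, c). *)
Lemma inf_le_hfun_unit (c : T) : unit3 c.2 -> inf Rset <= hfun c.
Proof.
case: c => c0 c /= hc; have inf_le y : Rset y -> inf Rset <= y.
  by move=> hy; apply: ge_inf => //; exists 0; exact: Rset_lb.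
case: (lerP `|c0| 1) => hc0; first by apply/inf_le/hfun_in_Rset; rewrite -?ler_norml.
have one_bound : -1 <= (1 : R) <= 1 by lra.
apply: (le_trans (inf_le _ (hfun_in_Rset hc one_bound))).
rewrite hfun_identity //; apply: (le_trans (ltW hc0)); exact: (hfun_ge_abs (c0, c)).
Qed.

(* Key estimate: r0 (c . x) <= h(c) for all c, by normalising c.2 to a unit vector. *)
Lemma inf_dot_le_hfun (x : 'rV[R]_3) (c : T) : unit3 x -> inf Rset * dot3 c.2 x <= hfun c.
Proof.
move=> hx; case: (lerP (dot3 c.2 x) 0) => hcx.
  exact: le_trans (mulr_ge0_le0 inf_ge0 hcx) (hfun_ge0 c).
have cc_gt0 : 0 < dot3 c.2 c.2 by have := dot3_CS c.2 x; rewrite hx mulr1; nra.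
set s := Num.sqrt (dot3 c.2 c.2).
have s_gt0 : 0 < s by rewrite sqrtr_gt0.
have ss : s * s = dot3 c.2 c.2 by rewrite -expr2 sqr_sqrtr // ltW.
set c' := s^-1 *: c.
have c_eq : c = s *: c' by rewrite /c' scalerA divff ?gt_eqF // scale1r.
have c'_unit : unit3 c'.2.
  by rewrite /unit3 /c' /= dot3Zl dot3Zr -ss mulrA -expr2 -exprMn mulVf ?gt_eqF // expr1n.
rewrite {2}c_eq hfunZ (gtr0_norm s_gt0) {1}c_eq /= dot3Zl mulrCA ler_pM2l //.
have := dot3_unit_bound c'_unit hx => /andP [_ h1].
by have := inf_le_hfun_unit c'_unit; have := inf_ge0; nra.
Qed.

Lemma bloch_decomposition (x : 'rV[R]_3) : unit3 x ->
  exists t : 'I_n -> R, (forall i, -1 <= t i <= 1) /\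
    \sum_(i < n) t i *: bloch i = inf Rset *: ((0, x) : T).
Proof.
move=> hx; pose X c := inf Rset * bdot c (0, x).
have hX : scalar X by move=> a c d; rewrite /X bdot_scalarl; ring.
have Xdom c : X c <= hfun c.
  by rewrite /X /bdot /= mulr0 add0r; exact: inf_dot_le_hfun.
have [t ht eqX] := dominated_functional hX (fun i => bdot_scalarl (bloch i)) Xdom.
by exists t; split => //; apply: bdot_inj => c; rewrite bdot_sumr bdotZr -eqX.
Qed.

(* Attainment: the weights (1 +/- t_i)/2 simulate P_r0. *)
Lemma simulates_inf : simulates (povm_of alpha eta nv) (Pfam (inf Rset)).
Proof.
have [tf htf] := choice (fun x : unit_vec R => bloch_decomposition (svalP x)).
pose sgn (a : bool) : R := if a then 1 else -1.
exists (fun a x i => (1 + sgn a * tf x i) / 2); split; [|split].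
- move=> a x i; case: (htf x) => /(_ i) /andP [h1 h2] _; rewrite /sgn; case: a; lra.
- by move=> x i; rewrite big_bool /sgn /=; field.
- move=> a x; case: (htf x) => _ hdec.
  under eq_bigr do rewrite povm_bloch.
  by rewrite pauli_sum sum_half_weights sum_bloch hdec Pfam_pauli scalerA.
Qed.

(* Optimality: a simulation of P_r yields r = sum_i (2 p_i - 1) <(c0, c), pi_i> <= h(c0, c). *)
Lemma simulation_bound (r : R) :
  simulates (povm_of alpha eta nv) (Pfam r) -> r <= inf Rset.
Proof.
case=> p [p_ge0 [p_sum p_eq]].
apply: lb_le_inf Rset_ne _ => y /Rset_hfun [c0 [c [hc _ ->]]].
pose x : unit_vec R := exist _ c hc; pose q i := p true x i.
have hdec : 2^-1 *: ((1, 0) + (1 * r) *: (0, c)) = \sum_(i < n) q i *: bloch i.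
  by apply: pauli_inj; rewrite -pauli_sum -(Pfam_pauli r x true) p_eq (funext povm_bloch).
have q_bound i : -1 <= 2 * q i - 1 <= 1.
  have := p_sum x i; rewrite big_bool /= /q; have := p_ge0 true x i; have := p_ge0 false x i.
  by move=> h1 h2 h3; apply/andP; split; lra.
have q_mean : \sum_(i < n) q i * bdot (c0, c) (bloch i) = 2^-1 * (c0 + r).
  by rewrite -bdot_sumr -hdec bdotZr addrC bdot_linearr /bdot /= hc dot3_0r; congr (_ * _); ring.
have -> : r = \sum_(i < n) (2 * q i - 1) * bdot (c0, c) (bloch i).
  under eq_bigr do rewrite mulrBl mul1r -mulrA.
  by rewrite sumrB -mulr_sumr q_mean bdot_sum_bloch /=; field.
apply: ler_sum => i _; have /andP [h1 h2] := q_bound i.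
apply: le_trans (ler_norm _) _; rewrite normrM ler_piMl //.
by rewrite ler_norml h1 h2.
Qed.
End SimulationRadius.

Unset Implicit Arguments.

Theorem theorem3 (R : realType) (n : nat) (alpha eta : 'I_n -> R)
    (nv : 'I_n -> 'rV[R]_3) :
  (forall i, 0 <= alpha i) ->
  (forall i, 0 <= eta i <= 1) ->
  (forall i, unit3 (nv i)) ->
  \sum_(i < n) alpha i = 1 ->
  \sum_(i < n) (alpha i * eta i) *: nv i = 0 ->
  is_Rval (povm_of alpha eta nv)
    (inf [set x : R | exists (c : 'rV[R]_3) (c0 : R),
            unit3 c /\ -1 <= c0 <= 1 /\
            x = \sum_(i < n) `|alpha i * (c0 + eta i * dot3 c (nv i))|]).
Proof.
move=> alpha_ge0 eta_01 nv_unit alpha_sum bloch_balance; split.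
- exact: simulates_inf.
- by move=> r; exact: simulation_bound.
Qed.
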